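(* For a $K\times N$ multicast switch with a given traffic pattern, if a rate vector $\mathbf r$ is admissible, then its enhanced rate vector $\mathbf e(\mathbf r)$ lies in $QSTAB(G)$, where $G$ is the enhanced conflict graph; i.e. $\mathbf e(\mathbf r)$ is nonnegative and satisfies all clique inequalities of $G$.
   Context: A flow is a pair $(i,J)$ with input $i\in[K]$ and nonempty fanout $J\subseteq[N]$; a traffic pattern is a finite set of flows; a rate vector assigns $r_{iJ}\ge0$ to each flow. Subflows: $(i,J,j)$ with $j\in J$. $\mathbf r$ is admissible if $\mathbf r\ge0$, for each input $i$ the sum of $r_{iJ}$ over flows from $i$ is at most 1, and for each output $j$ the sum of $r_{iJ}$ over flows with $j\in J$ is at most 1. Enhanced rate vector: $\mathbf e(\mathbf r)_{iJj}=r_{iJ}$. Enhanced conflict graph $G$: one vertex per subflow; distinct $(i,J,j),(i',J',j')$ adjacent iff $j=j'$, or $i=i'$ and $J\ne J'$. $QSTAB(G)=\{x\ge0:\sum_{v\in Q}x_v\le1 \text{ for every clique } Q\}$. *)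

From mathcomp Require Import all_boot all_order all_algebra.
Set Implicit Arguments. Unset Strict Implicit. Unset Printing Implicit Defensive.
Import Order.TTheory GRing.Theory Num.Theory.
Local Open Scope ring_scope.

(* A K x N multicast switch: inputs 'I_K, outputs 'I_N. *)
Definition flow (K N : nat) := ('I_K * {set 'I_N})%type.
Definition subflow (K N : nat) := ('I_K * {set 'I_N} * 'I_N)%type.

Definition traffic_pattern (K N : nat) (F : {set flow K N}) : Prop :=
  forall f, f \in F -> f.2 != set0.

Definition admissible (R : realFieldType) (K N : nat) (F : {set flow K N})
    (r : flow K N -> R) : Prop :=
  [/\ forall f, f \in F -> 0 <= r f,
      forall i : 'I_K, \sum_(f in F | f.1 == i) r f <= 1
    & forall j : 'I_N, \sum_(f in F | j \in f.2) r f <= 1].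

(* Vertices of the enhanced conflict graph: the subflows (i,J,j), j in J. *)
Definition subflows (K N : nat) (F : {set flow K N}) : {set subflow K N} :=
  [set v : subflow K N | ((v.1.1, v.1.2) \in F) && (v.2 \in v.1.2)].

Definition enhanced (R : realFieldType) (K N : nat) (r : flow K N -> R)
    (v : subflow K N) : R := r (v.1.1, v.1.2).

Definition ecg_adj (K N : nat) (u v : subflow K N) : bool :=
  (u != v) && ((u.2 == v.2) || ((u.1.1 == v.1.1) && (u.1.2 != v.1.2))).

Definition is_clique (K N : nat) (F : {set flow K N}) (Q : {set subflow K N}) : Prop :=
  Q \subset subflows F /\
  (forall u v, u \in Q -> v \in Q -> u != v -> ecg_adj u v).

Definition in_QSTAB (R : realFieldType) (K N : nat) (F : {set flow K N})
    (x : subflow K N -> R) : Prop :=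
  (forall v, v \in subflows F -> 0 <= x v) /\
  (forall Q, is_clique F Q -> \sum_(v in Q) x v <= 1).

From mathcomp Require Import all_boot all_order all_algebra.
Set Implicit Arguments. Unset Strict Implicit. Unset Printing Implicit Defensive.
Import Order.TTheory GRing.Theory Num.Theory.
Local Open Scope ring_scope.

(* Any two subflows of a clique share their output or their input, so a whole
   clique lives on a single output or on a single input.  Distinct subflows of
   one flow are never adjacent, so a clique meets each flow at most once; its
   e(r)-weight is therefore a sum of r over distinct flows through one port,
   which admissibility bounds by 1. *)

Lemma ler_sum_subset (R : numDomainType) (T : finType) (A B : pred T)
    (x : T -> R) :
  (forall t, A t -> B t) -> (forall t, B t -> 0 <= x t) ->
  \sum_(t | A t) x t <= \sum_(t | B t) x t.
Proof.
move=> subAB x_ge0; rewrite [X in _ <= X](bigID A) /=.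
have -> : \sum_(t | B t && A t) x t = \sum_(t | A t) x t.
  by apply: eq_bigl => t; apply/andb_idl/subAB.
by rewrite lerDl sumr_ge0 // => t /andP[/x_ge0].
Qed.

Lemma enhancedE (R : realFieldType) (K N : nat) (r : flow K N -> R)
    (v : subflow K N) :
  enhanced r v = r v.1.
Proof. by case: v => [[i J] j]. Qed.

Lemma mem_subflows (K N : nat) (F : {set flow K N}) (v : subflow K N) :
  (v \in subflows F) = (v.1 \in F) && (v.2 \in v.1.2).
Proof. by case: v => [[i J] j]; rewrite inE. Qed.

Section Clique.

Variables (K N : nat) (F : {set flow K N}) (Q : {set subflow K N}).
Hypothesis Qclique : is_clique F Q.

Lemma clique_flow u : u \in Q -> (u.1 \in F) /\ (u.2 \in u.1.2).
Proof.
by move=> uQ; apply/andP; rewrite -mem_subflows (subsetP Qclique.1).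
Qed.

Lemma clique_share_port u v :
  u \in Q -> v \in Q -> u.2 = v.2 \/ u.1.1 = v.1.1.
Proof.
move=> uQ vQ; have [-> | neq_uv] := eqVneq u v; first by left.
have := Qclique.2 u v uQ vQ neq_uv; rewrite /ecg_adj neq_uv /=.
by case/orP => [/eqP | /andP[/eqP]]; [left | right].
Qed.

Lemma clique_fst_inj : {in Q &, injective (fun v : subflow K N => v.1)}.
Proof.
move=> u v uQ vQ /= eq_flow; apply/eqP/negPn/negP => neq_uv.
have := Qclique.2 u v uQ vQ neq_uv.
rewrite /ecg_adj neq_uv eq_flow !eqxx /= orbF => /eqP eq_out.
by move/eqP: neq_uv; apply; case: u v eq_flow eq_out {uQ vQ} => [f j] [g k] /= -> ->.
Qed.

Lemma clique_same_output_or_same_input :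
  (forall u v, u \in Q -> v \in Q -> u.2 = v.2) \/
  (forall u v, u \in Q -> v \in Q -> u.1.1 = v.1.1).
Proof.
have [/existsP[u /andP[uQ /existsP[v /andP[vQ neq_out]]]] | same_out] :=
  boolP [exists u in Q, exists v in Q, u.2 != v.2]; last first.
  left=> u v uQ vQ; apply/eqP; apply: contraNT same_out => neq_out.
  by apply/existsP; exists u; rewrite uQ; apply/existsP; exists v; rewrite vQ.
have in_u_v : u.1.1 = v.1.1.
  by case: (clique_share_port uQ vQ) => // /eqP; rewrite (negbTE neq_out).
suff in_u w : w \in Q -> w.1.1 = u.1.1.
  by right=> w1 w2 w1Q w2Q; rewrite (in_u w1) // (in_u w2).
move=> wQ; have [eq_out | //] := clique_share_port wQ uQ.
case: (clique_share_port wQ vQ) => [eq_out' | ->] //.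
by move/eqP: neq_out; rewrite -eq_out eq_out'.
Qed.

Lemma sum_enhanced_clique (R : realFieldType) (r : flow K N -> R) :
  \sum_(v in Q) enhanced r v = \sum_(f in [set v.1 | v in Q]) r f.
Proof.
rewrite big_imset /=; last exact: clique_fst_inj.
by apply: eq_bigr => v _; rewrite enhancedE.
Qed.

End Clique.

Theorem theorem5 (R : realFieldType) (K N : nat) (F : {set flow K N})
    (r : flow K N -> R) :
  traffic_pattern F -> admissible F r -> in_QSTAB F (enhanced r).
Proof.
move=> _ [r_ge0 r_in r_out]; split.
  by move=> v; rewrite mem_subflows enhancedE => /andP[/r_ge0].
move=> Q Qclique; rewrite (sum_enhanced_clique Qclique r).
have [-> | [v0 v0Q]] := set_0Vmem Q; first by rewrite imset0 big_set0 ler01.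
have [same_out | same_in] := clique_same_output_or_same_input Qclique.
- apply: le_trans (r_out v0.2).
  apply: ler_sum_subset => [_ /imsetP[w wQ ->] | f /andP[/r_ge0 //]].
  by have [-> ?] := clique_flow Qclique wQ; rewrite -(same_out w v0).
- apply: le_trans (r_in v0.1.1).
  apply: ler_sum_subset => [_ /imsetP[w wQ ->] | f /andP[/r_ge0 //]].
  by have [-> _] := clique_flow Qclique wQ; rewrite /= (same_in w v0).
Qed.
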